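(* In any tree $T=(V,E)$, the quantity $$\Lambda_1=\sum_{\{st,uv\}\in Q}\big(a_{su}(k_t+k_v)+a_{sv}(k_t+k_u)+a_{tu}(k_s+k_v)+a_{tv}(k_s+k_u)\big)$$ satisfies $$\Lambda_1=\sum_{st\in E}\Big((k_t-1)(\xi(s)-k_t)+(k_s-1)(\xi(t)-k_s)\Big).$$
   Context: $a_{ij}$ adjacency entries, $k_x$ degree, $\xi(s)=\sum_{t\in\Gamma(s)}k_t$ with $\Gamma(s)$ the neighbourhood of $s$. $Q$ is the set of unordered pairs $\{st,uv\}$ of edges with $s,t,u,v$ pairwise distinct. *)

From mathcomp Require Import all_boot all_order all_algebra.
Set Implicit Arguments. Unset Strict Implicit. Unset Printing Implicit Defensive.
Import Order.TTheory GRing.Theory Num.Theory.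

Definition simple_graph (T : finType) (e : rel T) : Prop :=
  symmetric e /\ irreflexive e.

Definition connected_graph (T : finType) (e : rel T) : Prop :=
  forall x y : T, connect e x y.

Definition has_cycle (T : finType) (e : rel T) : Prop :=
  exists (x : T) (p : seq T),
    [/\ 2 <= size p, uniq (x :: p), path e x p & e (last x p) x].

Definition is_tree (T : finType) (e : rel T) : Prop :=
  [/\ simple_graph e, 0 < #|T|, connected_graph e & ~ has_cycle e].

Definition edges (T : finType) (e : rel T) : {set {set T}} :=
  [set [set x; y] | x in T, y in T & e x y].

(* Q: unordered pairs {st, uv} of edges with s,t,u,v pairwise distinct,
   i.e. pairs of vertex-disjoint edges *)
Definition Qpairs (T : finType) (e : rel T) : {set {set {set T}}} :=
  [set [set A; B] | A in edges e, B in edges e & [disjoint A & B]].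

Local Open Scope ring_scope.

Definition adj (T : finType) (e : rel T) (x y : T) : int := (e x y : nat)%:Z.

Definition deg (T : finType) (e : rel T) (x : T) : int := #|[set y | e x y]|%:Z.

Definition xi (T : finType) (e : rel T) (s : T) : int :=
  \sum_(t | e s t) deg e t.

(* For edges A = {s,t}, B = {u,v}: the summand
   a_su(k_t+k_v) + a_sv(k_t+k_u) + a_tu(k_s+k_v) + a_tv(k_s+k_u),
   written as a sum over the choice x in A, y in B, where the "other"
   endpoint of A (resp. B) is the unique element of A :\ x (resp. B :\ y). *)
Definition Lsummand (T : finType) (e : rel T) (A B : {set T}) : int :=
  \sum_(x in A) \sum_(y in B)
     adj e x y * (\sum_(z in A :\ x) deg e z + \sum_(w in B :\ y) deg e w).

(* The summand for q = {A, B} in Q: pick one element A of q, B is the other.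
   (Lsummand is symmetric, so the choice is immaterial.) *)
Definition Qsummand (T : finType) (e : rel T) (q : {set {set T}}) : int :=
  let A := odflt set0 [pick A in q] in
  let B := odflt set0 [pick B in q :\ A] in
  Lsummand e A B.

Definition Lambda1 (T : finType) (e : rel T) : int :=
  \sum_(q in Qpairs e) Qsummand e q.

(* For an edge A = {s,t}: (k_t-1)(xi(s)-k_t) + (k_s-1)(xi(t)-k_s),
   written as the sum over the choice of s in A, t the other endpoint. *)
Definition Rsummand (T : finType) (e : rel T) (A : {set T}) : int :=
  \sum_(s in A) \sum_(t in A :\ s) ((deg e t - 1) * (xi e s - deg e t)).

From mathcomp Require Import all_boot all_order all_algebra.
Import Order.TTheory GRing.Theory Num.Theory.
Set Implicit Arguments. Unset Strict Implicit. Unset Printing Implicit Defensive.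
Local Open Scope ring_scope.

(* Both sides equal the sum of k_d over the simple paths a-b-c-d on four
   distinct vertices.  On the left, the term a_su k_v of the summand of
   {st,uv} counts the path t-s-u-v, and every simple path arises exactly once
   in this way.  On the right, for the edge st, (k_t - 1)(xi(s) - k_t) is the
   sum of k_u over the walks t'-t-s-u with t' <> s and u <> t; such a walk is
   a simple path unless t' = u, which would close a triangle. *)

Section UnorderedPairs.
Variables (V : nmodType) (X : finType) (D : {pred X}) (R : rel X).
Hypotheses (R_sym : symmetric R) (R_irr : {in D, forall x, ~~ R x x}).

Let pairs := [set [set x; y] | x in D, y in D & R x y].

Lemma in_pairs_darts A x y : A \in pairs ->
  (x \in A) && (y \in A :\ x) = [&& x \in D, y \in D, R x y & [set x; y] == A].
Proof.
case/imset2P=> a b aD; rewrite inE => /andP[bD Rab] ->{A}.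
apply/idP/idP.
- move=> /andP[]; rewrite in_setD1 !inE.
  move=> /orP[]/eqP-> /andP[] /[swap] /orP[]/eqP->; rewrite ?eqxx // => _.
    by rewrite aD bD Rab.
  by rewrite bD aD R_sym Rab setUC eqxx.
case/and4P=> xD yD Rxy /eqP <-; rewrite set21 in_setD1 set22 andbT.
by apply: contraTneq Rxy => ->; exact: R_irr.
Qed.

Lemma sum_pairs_darts (F : {set X} -> X -> X -> V) :
  \sum_(A in pairs) \sum_(x in A) \sum_(y in A :\ x) F A x y
  = \sum_(x in D) \sum_(y in D | R x y) F [set x; y] x y.
Proof.
rewrite [RHS]pair_big_dep (partition_big (fun p => [set p.1; p.2]) (mem pairs)) /=.
  apply: eq_bigr => A pairsA; rewrite pair_big_dep.
  apply: eq_big => [[x y]|[x y]] /=; first by rewrite in_pairs_darts // !andbA.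
  by rewrite in_pairs_darts // => /and4P[_ _ _ /eqP->].
by move=> [x y] /= /and3P[xD yD Rxy]; apply: imset2_f; rewrite // inE yD.
Qed.

Lemma sum_pairs_incidence (F : {set X} -> X -> V) :
  \sum_(A in pairs) \sum_(x in A) F A x
  = \sum_(x in D) \sum_(y in D | R x y) F [set x; y] x.
Proof.
rewrite -(sum_pairs_darts (fun A x _ => F A x)).
apply: eq_bigr => A pairsA; apply: eq_bigr => x xA; rewrite sumr_const.
suff -> : #|A :\ x| = 1%N by [].
case/imset2P: pairsA xA => a b aD; rewrite inE => /andP[_ Rab] -> xA.
have ab : a != b by apply: contraTneq Rab => <-; exact: R_irr.
by move: (cardsD1 x [set a; b]); rewrite xA cards2 ab add1n => -[<-].
Qed.

End UnorderedPairs.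

Lemma set2D1l (X : finType) (a b : X) : a != b -> [set a; b] :\ a = [set b].
Proof. by move=> ab; rewrite setU1K // inE. Qed.

Lemma set2D1r (X : finType) (a b : X) : a != b -> [set a; b] :\ b = [set a].
Proof. by move=> ab; rewrite setUC setU1K // inE eq_sym. Qed.

Lemma sum_set2_darts (V : nmodType) (X : finType) (a b : X) (F : X -> X -> V) :
  a != b ->
  \sum_(x in [set a; b]) \sum_(y in [set a; b] :\ x) F x y = F a b + F b a.
Proof.
move=> ab; rewrite big_setU1 ?inE //= big_set1 set2D1l // set2D1r //.
by rewrite !big_set1.
Qed.

Lemma sumr_cond (V : nmodType) (I : finType) (P : pred I) (F : I -> V) :
  \sum_(i | P i) F i = \sum_i F i *+ P i.
Proof. by rewrite big_mkcond; apply: eq_bigr => i _; rewrite mulrb. Qed.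

Section SimpleGraph.
Variables (T : finType) (e : rel T).

Definition simple_path3 (a b c d : T) : bool :=
  path e a [:: b; c; d] && uniq [:: a; b; c; d].

Definition path3_end_deg : int :=
  \sum_a \sum_b \sum_c \sum_d deg e d *+ simple_path3 a b c d.

Definition triangle_free : Prop := forall a b c, e a b -> e b c -> ~~ e c a.

Definition Lsummand_right (A B : {set T}) : int :=
  \sum_(x in A) \sum_(y in B) adj e x y * \sum_(w in B :\ y) deg e w.

Hypotheses (e_sym : symmetric e) (e_irr : irreflexive e).

Lemma edge_neq x y : e x y -> x != y.
Proof. by apply: contraTneq => ->; rewrite e_irr. Qed.

Lemma edge_not_disjoint_self : {in edges e, forall A : {set T}, ~~ [disjoint A & A]}.
Proof.
move=> _ /imset2P[x y _ _ ->]; rewrite -setI_eq0 setIid.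
by apply/set0Pn; exists x; exact: set21.
Qed.

Lemma sum_edges_darts (V : nmodType) (F : {set T} -> T -> T -> V) :
  \sum_(A in edges e) \sum_(x in A) \sum_(y in A :\ x) F A x y
  = \sum_x \sum_(y | e x y) F [set x; y] x y.
Proof. by rewrite sum_pairs_darts // => x _; rewrite e_irr. Qed.

Lemma sum_edges_incidence (V : nmodType) (F : {set T} -> T -> V) :
  \sum_(A in edges e) \sum_(x in A) F A x = \sum_x \sum_(y | e x y) F [set x; y] x.
Proof. by rewrite sum_pairs_incidence // => x _; rewrite e_irr. Qed.

Lemma LsummandE A B : Lsummand e A B = Lsummand_right A B + Lsummand_right B A.
Proof.
rewrite /Lsummand_right [X in _ + X]exchange_big -big_split /=.
apply: eq_bigr => x _; rewrite -big_split; apply: eq_bigr => y _ /=.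
by rewrite /adj (e_sym y) mulrDr addrC.
Qed.

Lemma Qsummand_set2 A B : A != B -> Qsummand e [set A; B] = Lsummand e A B.
Proof.
move=> AB; rewrite /Qsummand; case: pickP => [C | /(_ A)]; last by rewrite set21.
case/set2P=> ->; rewrite ?set2D1l ?set2D1r //=.
  by case: pickP => [C' /set1P-> | /(_ B)] //; rewrite set11.
case: pickP => [C' /set1P-> | /(_ A)] //=; last by rewrite set11.
by rewrite !LsummandE addrC.
Qed.

Lemma Qsummand_darts q : q \in Qpairs e ->
  Qsummand e q = \sum_(A in q) \sum_(B in q :\ A) Lsummand_right A B.
Proof.
case/imset2P=> A B _; rewrite inE => /andP[Be dAB] ->.
have nAB : A != B.
  by apply: contraTneq dAB => ->; exact: edge_not_disjoint_self.
by rewrite Qsummand_set2 // sum_set2_darts // LsummandE.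
Qed.

Lemma Lambda1E : Lambda1 e =
  \sum_(A in edges e) \sum_(B in edges e | [disjoint A & B]) Lsummand_right A B.
Proof.
rewrite /Lambda1 (eq_bigr _ Qsummand_darts) /Qpairs sum_pairs_darts //.
  exact: disjoint_sym.
exact: edge_not_disjoint_self.
Qed.

Lemma simple_path3_disjoint a b c d : simple_path3 a b c d =
  [&& e b a, e c d, e b c & [disjoint [set b; a] & [set c; d]]].
Proof.
rewrite /simple_path3 /= disjoints_subset subUset !sub1set !inE (e_sym a b).
case ba: (e b a) => //=; case cd: (e c d); rewrite /= ?andbF //.
rewrite (eq_sym a b) (negPf (edge_neq ba)) (negPf (edge_neq cd)) /=.
by rewrite !andbT [X in _ && X]andbC.
Qed.

Lemma simple_path3_nonbacktracking a b c d : triangle_free -> e b c ->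
  simple_path3 a b c d = [&& e b a, a != c, e c d & d != b].
Proof.
move=> tf bc; rewrite /simple_path3 /= bc !inE (e_sym a b).
case ba: (e b a) => //=; case cd: (e c d); rewrite /= ?andbF //.
have ad : a != d.
  by apply: contraL ba => /eqP ad; rewrite e_sym; apply: tf bc _; rewrite ad.
rewrite (eq_sym a b) (negPf (edge_neq ba)) (negPf (edge_neq bc)).
by rewrite (negPf (edge_neq cd)) (negPf ad) (eq_sym d b) /= orbF andbT.
Qed.

Lemma sum_disjoint_edges_adj_deg (A : {set T}) x :
  \sum_(B in edges e | [disjoint A & B])
     \sum_(y in B) adj e x y * \sum_(w in B :\ y) deg e w
  = \sum_y \sum_(w | [&& e y w, e x y & [disjoint A & [set y; w]]]) deg e w.
Proof.
rewrite big_mkcondr /=.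
under eq_bigr => B _ do rewrite -mulrb -sumrMnl.
under eq_bigr => B _ do under eq_bigr => y _ do rewrite mulr_sumr -sumrMnl.
rewrite sum_edges_darts; apply: eq_bigr => y _; rewrite [LHS]sumr_cond [RHS]sumr_cond.
apply: eq_bigr => w _.
by rewrite /adj -natz mulr_natl -!mulrnA !mulnb andbA andbC.
Qed.

Lemma Lambda1_path3 : Lambda1 e = path3_end_deg.
Proof.
rewrite Lambda1E /Lsummand_right.
under eq_bigr => A _ do rewrite exchange_big.
(* x, x', y, w play the roles of b, a, c, d *)
rewrite sum_edges_incidence /path3_end_deg exchange_big /=.
apply: eq_bigr => x _; rewrite [LHS]sumr_cond; apply: eq_bigr => x' _.
rewrite sum_disjoint_edges_adj_deg -sumrMnl; apply: eq_bigr => y _.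
rewrite -sumrMnl [LHS]sumr_cond; apply: eq_bigr => w _.
by rewrite -mulrnA mulnb simple_path3_disjoint.
Qed.

Lemma deg_sum1 x : deg e x = \sum_(y | e x y) 1.
Proof. by rewrite /deg -sum1dep_card -natz natr_sum. Qed.

Lemma deg_subr1 t s : e t s -> deg e t - 1 = \sum_(u | e t u && (u != s)) 1.
Proof. by move=> ts; rewrite deg_sum1 (bigD1 s) //= addrC addrK. Qed.

Lemma xi_subr_deg s t : e s t ->
  xi e s - deg e t = \sum_(u | e s u && (u != t)) deg e u.
Proof. by move=> st; rewrite /xi (bigD1 t) //= addrC addrK. Qed.

Lemma sum_edges_Rsummand : triangle_free ->
  \sum_(A in edges e) Rsummand e A = path3_end_deg.
Proof.
move=> tf; rewrite /Rsummand sum_edges_darts /path3_end_deg.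
(* s, t, t', u play the roles of c, b, a, d *)
rewrite exchange_big; under eq_bigr => b _ do rewrite exchange_big.
rewrite exchange_big /=.
apply: eq_bigr => s _; rewrite big_mkcond; apply: eq_bigr => t _ /=.
case: ifP => st; last first.
  rewrite big1 // => t' _; rewrite big1 // => u _.
  by rewrite /simple_path3 /= (e_sym t s) st andbF mulr0n.
have ts : e t s by rewrite e_sym.
rewrite (deg_subr1 ts) (xi_subr_deg st) mulr_suml [LHS]sumr_cond.
apply: eq_bigr => t' _.
rewrite mul1r -sumrMnl [LHS]sumr_cond; apply: eq_bigr => u _.
by rewrite -mulrnA mulnb simple_path3_nonbacktracking // -andbA.
Qed.

End SimpleGraph.

Lemma tree_triangle_free (T : finType) (e : rel T) : is_tree e -> triangle_free e.
Proof.
case=> [[_ e_irr] _ _ acyclic] a b c ab bc; apply/negP => ca; apply: acyclic.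
exists a, [:: b; c]; split=> //=; last by rewrite ab bc.
rewrite !inE negb_or (edge_neq e_irr ab) (edge_neq e_irr bc) eq_sym.
by rewrite (edge_neq e_irr ca).
Qed.

Theorem corollary1 (T : finType) (e : rel T) :
  is_tree e ->
  Lambda1 e = \sum_(A in edges e) Rsummand e A.
Proof.
move=> tree; have [[e_sym e_irr] _ _ _] := tree.
have triangle_free_e := tree_triangle_free tree.
by rewrite Lambda1_path3 // sum_edges_Rsummand.
Qed.
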